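(* The twi-distance $\delta^*:\mathcal{T}^*\times\mathcal{T}^*\to\mathbb{R}_{\ge0}$, $\delta^*([x],[y])=\inf_{x'\in[x]}\inf_{y'\in[y]}\delta(x',y')$, is well defined and is a semi-metric on $\mathcal{T}^*$, and it satisfies $\delta^*([x],[y])=\delta(x^*,y^* )$ for all $x,y\in\mathcal{T}$, where $x^*,y^*$ are the condensed forms of $x,y$.
   Context: A time series of length $n\ge1$ is a finite real sequence; $\mathcal{T}$ is the set of all time series of finite length. For $m,n\in\mathbb{N}$, a warping path of order $m\times n$ is a sequence $p=(p_1,\dots,p_\ell)$ of points in $[m]\times[n]$ ($[n]=\{1,\dots,n\}$) with $p_1=(1,1)$, $p_\ell=(m,n)$, $p_{l+1}-p_l\in\{(1,0),(0,1),(1,1)\}$; $\mathcal{P}_{m,n}$ is the set of these. The dtw-distance of $x$ (length $m$) and $y$ (length $n$) is $\delta(x,y)=\min_{p\in\mathcal{P}_{m,n}}\big(\sum_{(i,j)\in p}(x_i-y_j)^2\big)^{1/2}$. Warping identification is the relation $x\sim y\iff\delta(x,y)=0$, which is an equivalence relation; $[x]=\{y\in\mathcal{T}:x\sim y\}$ and $\mathcal{T}^*=\{[x]:x\in\mathcal{T}\}$ is the quotient set. A time series $x'$ is an expansion of $x=(x_1,\dots,x_n)$, written $x'\succ x$, if there are integers $\alpha_i\ge1$ with $x'=(x_1^{(\alpha_1)},\dots,x_n^{(\alpha_n)})$, where $x_i^{(\alpha_i)}$ denotes $\alpha_i$ consecutive copies of $x_i$. A time series is irreducible if no two consecutive elements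 are equal. The condensed form $x^*$ of $x$ is the unique irreducible time series with $x\succ x^*$ (obtained by collapsing maximal runs of equal consecutive values). A semi-metric on a set $X$ is a function $d:X\times X\to\mathbb{R}$ with $d\ge0$, $d(a,b)=0\iff a=b$, and $d(a,b)=d(b,a)$. *)

From Stdlib Require Import Reals Lra List ClassicalEpsilon.
Import ListNotations.
Open Scope R_scope.

Definition ts : Type := { x : list R | (1 <= length x)%nat }.

(** Warping paths of order m x n (1-indexed points). *)
Definition wstep (p q : nat * nat) : Prop :=
  (fst q = S (fst p) /\ snd q = snd p) \/
  (fst q = fst p /\ snd q = S (snd p)) \/
  (fst q = S (fst p) /\ snd q = S (snd p)).

Fixpoint wsteps (p : list (nat * nat)) : Prop :=
  match p with
  | a :: ((b :: _) as t) => wstep a b /\ wsteps t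
  | _ => True
  end.

Definition warping_path (m n : nat) (p : list (nat * nat)) : Prop :=
  hd_error p = Some (1%nat, 1%nat) /\
  last p (0%nat, 0%nat) = (m, n) /\
  wsteps p /\
  Forall (fun ij => (1 <= fst ij <= m)%nat /\ (1 <= snd ij <= n)%nat) p.

Definition path_cost (x y : list R) (p : list (nat * nat)) : R :=
  fold_right (fun ij acc =>
    (nth (pred (fst ij)) x 0 - nth (pred (snd ij)) y 0) ^ 2 + acc) 0 p.

Definition is_dtw (x y : list R) (d : R) : Prop :=
  (exists p, warping_path (length x) (length y) p /\ d = sqrt (path_cost x y p)) /\
  (forall p, warping_path (length x) (length y) p -> d <= sqrt (path_cost x y p)).

Definition dtw (x y : list R) : R := epsilon (inhabits 0) (is_dtw x y).

Definition widen (x y : ts) : Prop := dtw (proj1_sig x) (proj1_sig y) = 0.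

Definition cls (x : ts) : ts -> Prop := fun y => widen x y.

Definition Tstar : Type := { A : ts -> Prop | exists x : ts, A = cls x }.

Definition toT (x : ts) : Tstar := exist _ (cls x) (ex_intro _ x eq_refl).

Definition is_glb (S : R -> Prop) (r : R) : Prop :=
  (forall s, S s -> r <= s) /\ (forall b, (forall s, S s -> b <= s) -> b <= r).

Definition Rinf (S : R -> Prop) : R := epsilon (inhabits 0) (is_glb S).

Definition twi_set (A B : ts -> Prop) : R -> Prop :=
  fun r => exists x' y', A x' /\ B y' /\ r = dtw (proj1_sig x') (proj1_sig y').

Definition twi (A B : Tstar) : R := Rinf (twi_set (proj1_sig A) (proj1_sig B)).

(** Condensed form: collapse maximal runs of equal consecutive values. *)
Fixpoint condense (x : list R) : list R :=
  match x with
  | [] => []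
  | a :: t =>
      match condense t with
      | [] => [a]
      | b :: t' => if Req_EM_T a b then b :: t' else a :: b :: t'
      end
  end.

Definition semi_metric (X : Type) (d : X -> X -> R) : Prop :=
  (forall a b, 0 <= d a b) /\
  (forall a b, d a b = 0 <-> a = b) /\
  (forall a b, d a b = d b a).

From Stdlib Require Import Reals List Lra Lia ClassicalEpsilon ProofIrrelevance
  FunctionalExtensionality PropExtensionality.
Import ListNotations.
Open Scope R_scope.

(* Read from its first point, a warping path is a sequence of down, right and
   diagonal moves, so the squared dtw-distance is the least cost of an alignment
   built move by move ([align]).  Deleting the moves that stay inside a run of equal
   values never increases the cost, and a zero-cost alignment of two irreducible
   series forces them to be equal; hence [x ~ y] exactly when [x* = y*].  So every
   class [[x]] is the set of series with condensed form [x*]; it contains [x*], and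
   the dtw-distance of [x*] and [y*] is at most that of any members of [[x]] and
   [[y]], so the infimum is attained at the condensed forms and the semi-metric
   axioms pass from dtw to the quotient. *)

(* [align x y c]: some warping path between [x] and [y] has cost [c]; the
   constructors record the first move of the path. *)
Inductive align : list R -> list R -> R -> Prop :=
| align_one a b : align [a] [b] ((a - b) ^ 2)
| align_down a b x y c : align x (b :: y) c -> align (a :: x) (b :: y) ((a - b) ^ 2 + c)
| align_right a b x y c : align (a :: x) y c -> align (a :: x) (b :: y) ((a - b) ^ 2 + c)
| align_diag a b x y c : align x y c -> align (a :: x) (b :: y) ((a - b) ^ 2 + c).

Lemma align_nil_l y c : ~ align [] y c.
Proof. intro H; inversion H. Qed.

Lemma align_nil_r x c : ~ align x [] c.
Proof. intro H; inversion H. Qed.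

Lemma align_nonneg x y c : align x y c -> 0 <= c.
Proof. induction 1; pose proof (pow2_ge_0 (a - b)); lra. Qed.

Lemma align_head_le a b x y c : align (a :: x) (b :: y) c -> (a - b) ^ 2 <= c.
Proof.
  intro H; inversion H; subst; try lra;
    match goal with Hc : align _ _ ?c' |- _ => pose proof (align_nonneg _ _ _ Hc) end; lra.
Qed.

Lemma align_sym x y c : align x y c -> align y x c.
Proof.
  induction 1; replace ((a - b) ^ 2) with ((b - a) ^ 2) by ring;
    [apply align_one | apply align_right | apply align_down | apply align_diag]; assumption.
Qed.

Lemma align_cons_iff a b x y c :
  align (a :: x) (b :: y) c <->
  exists c', c = (a - b) ^ 2 + c' /\
    (((x = [] /\ y = []) /\ c' = 0) \/ align x (b :: y) c' \/ align (a :: x) y c' \/ align x y c').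
Proof.
  split.
  - intro H; inversion H; subst.
    + exists 0; split; [ring | auto].
    + eauto 6.
    + eauto 6.
    + eauto 6.
  - intros [c' [-> [[[-> ->] ->] | [H | [H | H]]]]].
    + rewrite Rplus_0_r; apply align_one.
    + apply align_down, H.
    + apply align_right, H.
    + apply align_diag, H.
Qed.

Lemma align_exists x y : x <> [] -> y <> [] -> exists c, align x y c.
Proof.
  revert y; induction x as [|a x IH]; intros y Hx Hy; [congruence|].
  destruct y as [|b y]; [congruence|].
  destruct x as [|a' x].
  - clear IH Hx Hy; revert b; induction y as [|b' y IHy]; intro b.
    + eexists; apply align_one.
    + destruct (IHy b') as [c Hc]; eexists; apply align_right, Hc.
  - destruct y as [|b' y].
    + destruct (IH [b]) as [c Hc]; try discriminate; eexists; apply align_down, Hc.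
    + destruct (IH (b' :: y)) as [c Hc]; try discriminate; eexists; apply align_diag, Hc.
Qed.

Definition least (P : R -> Prop) (c : R) : Prop := P c /\ forall c', P c' -> c <= c'.

Definition empty_or_least (P : R -> Prop) : Prop := (forall c, ~ P c) \/ exists c, least P c.

Lemma empty_or_least_ext (P Q : R -> Prop) :
  (forall c, P c <-> Q c) -> empty_or_least P -> empty_or_least Q.
Proof.
  intros E [H | [c [Hc Hmin]]]; [left; intros c Hc; apply (H c), E, Hc | right].
  exists c; split; [apply E, Hc | intros c' Hc'; apply Hmin, E, Hc'].
Qed.

Lemma empty_or_least_or (P Q : R -> Prop) :
  empty_or_least P -> empty_or_least Q -> empty_or_least (fun c => P c \/ Q c).
Proof.
  intros [HP | [p [Hp Mp]]] [HQ | [q [Hq Mq]]].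
  - left; intros c [H | H]; [eapply HP | eapply HQ]; eauto.
  - right; exists q; split; [now right|]; intros c [H | H]; [now destruct (HP c) | auto].
  - right; exists p; split; [now left|]; intros c [H | H]; [auto | now destruct (HQ c)].
  - right; exists (Rmin p q); split.
    + apply Rmin_case; auto.
    + intros c [H | H]; [pose proof (Mp c H) | pose proof (Mq c H)];
        pose proof (Rmin_l p q); pose proof (Rmin_r p q); lra.
Qed.

Lemma empty_or_least_shift k (P : R -> Prop) :
  empty_or_least P -> empty_or_least (fun c => exists c', c = k + c' /\ P c').
Proof.
  intros [H | [p [Hp Mp]]].
  - left; intros c [c' [_ Hc']]; eapply H, Hc'.
  - right; exists (k + p); split; [eauto|].
    intros c [c' [-> Hc']]; pose proof (Mp c' Hc'); lra.
Qed.

Lemma empty_or_least_guard (A : Prop) k : empty_or_least (fun c => A /\ c = k).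
Proof.
  destruct (classic A) as [HA | HA].
  - right; exists k; split; [auto | intros c [_ ->]; lra].
  - left; intros c [Hc _]; contradiction.
Qed.

Lemma align_empty_or_least x y : empty_or_least (align x y).
Proof.
  revert y; induction x as [|a x IHx]; intro y.
  { left; apply align_nil_l. }
  induction y as [|b y IHy].
  { left; apply align_nil_r. }
  apply (empty_or_least_ext _ _ (fun c => iff_sym (align_cons_iff a b x y c))).
  apply empty_or_least_shift.
  repeat apply empty_or_least_or; auto using empty_or_least_guard.
Qed.

Lemma align_least x y : x <> [] -> y <> [] -> exists c, least (align x y) c.
Proof.
  intros Hx Hy; destruct (align_empty_or_least x y) as [H | H]; [|exact H].
  destruct (align_exists x y Hx Hy) as [c Hc]; destruct (H c Hc).
Qed.

Definition is_move (di dj : nat) : Prop :=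
  (di = 1 /\ dj = 0 \/ di = 0 /\ dj = 1 \/ di = 1 /\ dj = 1)%nat.

Lemma wstep_move i0 j0 q :
  wstep (S i0, S j0) q <-> exists di dj, is_move di dj /\ q = (S (i0 + di), S (j0 + dj)).
Proof.
  destruct q as [i j]; unfold wstep, is_move; cbn [fst snd]; split.
  - intros [[-> ->] | [[-> ->] | [-> ->]]];
      [exists 1%nat, 0%nat | exists 0%nat, 1%nat | exists 1%nat, 1%nat]; split; auto; f_equal; lia.
  - intros (di & dj & Hm & E); injection E as -> ->; lia.
Qed.

Lemma align_move di dj a b x y c : is_move di dj ->
  align (skipn di (a :: x)) (skipn dj (b :: y)) c -> align (a :: x) (b :: y) ((a - b) ^ 2 + c).
Proof.
  intros [[-> ->] | [[-> ->] | [-> ->]]]; cbn [skipn];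
    [apply align_down | apply align_right | apply align_diag].
Qed.

Lemma wsteps_mono q p : wsteps (q :: p) ->
  Forall (fun r => fst q <= fst r /\ snd q <= snd r)%nat (q :: p).
Proof.
  revert q; induction p as [|r p IH]; intros q H.
  - constructor; [lia | constructor].
  - destruct H as [Hs Hw]; constructor; [lia|].
    eapply Forall_impl; [|exact (IH r Hw)]; cbv beta.
    destruct Hs as [[H1 H2] | [[H1 H2] | [H1 H2]]]; lia.
Qed.

(* [path_within i0 j0 ie je p]: [p] is a warping path from [(i0 + 1, j0 + 1)] to
   [(ie, je)]; [warping_path m n] is [path_within 0 0 m n] up to conversion. *)
Definition path_within (i0 j0 ie je : nat) (p : list (nat * nat)) : Prop :=
  hd_error p = Some (S i0, S j0) /\ last p (0, 0)%nat = (ie, je) /\ wsteps p /\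
  Forall (fun ij => (i0 < fst ij <= ie)%nat /\ (j0 < snd ij <= je)%nat) p.

(* The cost of [p] when the series [x] and [y] start at indices [i0 + 1], [j0 + 1]. *)
Definition offset_cost (i0 j0 : nat) (x y : list R) (p : list (nat * nat)) : R :=
  fold_right (fun ij acc => (nth (fst ij - S i0) x 0 - nth (snd ij - S j0) y 0) ^ 2 + acc) 0 p.

Lemma path_cost_offset x y p : path_cost x y p = offset_cost 0 0 x y p.
Proof.
  unfold path_cost, offset_cost; induction p as [|ij p IH]; [reflexivity|].
  cbn [fold_right]; rewrite IH, !Nat.sub_1_r; reflexivity.
Qed.

Lemma path_within_singleton i0 j0 : path_within i0 j0 (S i0) (S j0) [(S i0, S j0)].
Proof. repeat split; repeat constructor; cbn; lia. Qed.

Lemma path_within_cons i0 j0 di dj ie je p : is_move di dj ->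
  path_within (i0 + di) (j0 + dj) ie je p -> path_within i0 j0 ie je ((S i0, S j0) :: p).
Proof.
  intros Hm (Hhd & Hlast & Hws & Hbnd).
  destruct p as [|q p]; [discriminate|]; injection Hhd as ->.
  inversion Hbnd as [|? ? Hq]; subst; cbn in Hq.
  split; [reflexivity | split; [exact Hlast | split; [split; [|exact Hws] | constructor]]].
  - apply wstep_move; eauto.
  - cbn; lia.
  - eapply Forall_impl; [|exact Hbnd]; cbv beta; lia.
Qed.

Lemma path_within_uncons i0 j0 ie je r q p : path_within i0 j0 ie je (r :: q :: p) ->
  r = (S i0, S j0) /\ exists di dj, is_move di dj /\ q = (S (i0 + di), S (j0 + dj)) /\
    path_within (i0 + di) (j0 + dj) ie je (q :: p).
Proof.
  intros (Hhd & Hlast & [Hs Hws] & Hbnd); injection Hhd as ->; split; [reflexivity|].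
  destruct (proj1 (wstep_move _ _ _) Hs) as (di & dj & Hm & ->).
  exists di, dj; split; [exact Hm | split; [reflexivity|]].
  split; [reflexivity | split; [exact Hlast | split; [exact Hws|]]].
  apply Forall_inv_tail in Hbnd; pose proof (wsteps_mono _ _ Hws) as Hmono.
  rewrite Forall_forall in Hbnd, Hmono |- *; intros z Hz.
  specialize (Hbnd z Hz); specialize (Hmono z Hz); cbn in Hmono; lia.
Qed.

Lemma offset_cost_skipn i0 j0 di dj x y p :
  Forall (fun ij => (i0 + di < fst ij)%nat /\ (j0 + dj < snd ij)%nat) p ->
  offset_cost i0 j0 x y p = offset_cost (i0 + di) (j0 + dj) (skipn di x) (skipn dj y) p.
Proof.
  unfold offset_cost; induction 1 as [|[i j] p Hij _ IH]; [reflexivity|].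
  cbn [fold_right fst snd] in *; rewrite IH, !nth_skipn.
  replace (di + (i - S (i0 + di)))%nat with (i - S i0)%nat by lia.
  replace (dj + (j - S (j0 + dj)))%nat with (j - S j0)%nat by lia.
  reflexivity.
Qed.

Lemma offset_cost_step i0 j0 di dj ie je a b x y p :
  path_within (i0 + di) (j0 + dj) ie je p ->
  offset_cost i0 j0 (a :: x) (b :: y) ((S i0, S j0) :: p) =
  (a - b) ^ 2 + offset_cost (i0 + di) (j0 + dj) (skipn di (a :: x)) (skipn dj (b :: y)) p.
Proof.
  intros (_ & _ & _ & Hbnd); rewrite <- offset_cost_skipn.
  - unfold offset_cost; cbn [fold_right fst snd]; rewrite !Nat.sub_diag; reflexivity.
  - eapply Forall_impl; [|exact Hbnd]; cbv beta; lia.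
Qed.

Lemma path_within_extend i0 j0 di dj ie je a b x y c p : is_move di dj ->
  path_within (i0 + di) (j0 + dj) ie je p ->
  offset_cost (i0 + di) (j0 + dj) (skipn di (a :: x)) (skipn dj (b :: y)) p = c ->
  exists p', path_within i0 j0 ie je p' /\ offset_cost i0 j0 (a :: x) (b :: y) p' = (a - b) ^ 2 + c.
Proof.
  intros Hm Hp Hc; exists ((S i0, S j0) :: p); split.
  - exact (path_within_cons i0 j0 di dj ie je p Hm Hp).
  - rewrite (offset_cost_step i0 j0 di dj ie je a b x y p Hp), Hc; reflexivity.
Qed.

Lemma path_of_align x y c : align x y c -> forall i0 j0 ie je,
  ie = (i0 + length x)%nat -> je = (j0 + length y)%nat ->
  exists p, path_within i0 j0 ie je p /\ offset_cost i0 j0 x y p = c.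
Proof.
  induction 1 as [a b | a b x y c _ IH | a b x y c _ IH | a b x y c _ IH];
    intros i0 j0 ie je Hie Hje; cbn [length] in Hie, Hje.
  - exists [(S i0, S j0)]; split.
    + rewrite Hie, Hje, !Nat.add_1_r; apply path_within_singleton.
    + unfold offset_cost; cbn; rewrite !Nat.sub_diag; ring.
  - destruct (IH (i0 + 1) (j0 + 0) ie je)%nat as (p & Hp & Hc); cbn [length]; try lia.
    apply (path_within_extend i0 j0 1 0 ie je a b x y c p); [left | |]; auto.
  - destruct (IH (i0 + 0) (j0 + 1) ie je)%nat as (p & Hp & Hc); cbn [length]; try lia.
    apply (path_within_extend i0 j0 0 1 ie je a b x y c p); [right; left | |]; auto.
  - destruct (IH (i0 + 1) (j0 + 1) ie je)%nat as (p & Hp & Hc); try lia.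
    apply (path_within_extend i0 j0 1 1 ie je a b x y c p); [right; right | |]; auto.
Qed.

Lemma align_of_path p : forall i0 j0 x y,
  path_within i0 j0 (i0 + length x) (j0 + length y) p -> align x y (offset_cost i0 j0 x y p).
Proof.
  induction p as [|r p IH]; intros i0 j0 x y Hp; [destruct Hp as [[=] _]|].
  assert (Hr := proj2 (proj2 (proj2 Hp))); apply Forall_inv in Hr.
  destruct x as [|a x]; [cbn in Hr; lia|]; destruct y as [|b y]; [cbn in Hr; lia|].
  destruct p as [|q p].
  - destruct Hp as ([= ->] & Hlast & _); cbn in Hlast; injection Hlast as Hx Hy.
    destruct x; [|cbn in Hx; lia]; destruct y; [|cbn in Hy; lia].
    unfold offset_cost; cbn; rewrite !Nat.sub_diag, Rplus_0_r; apply align_one.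
  - destruct (path_within_uncons _ _ _ _ _ _ _ Hp) as (-> & di & dj & Hm & _ & Hq).
    rewrite (offset_cost_step _ _ _ _ _ _ a b x y _ Hq).
    apply (align_move di dj), IH; [exact Hm|].
    assert (Hd : (di <= 1 /\ dj <= 1)%nat) by (destruct Hm as [[-> ->] | [[-> ->] | [-> ->]]]; lia).
    rewrite !length_skipn; cbn [length].
    replace (i0 + di + (S (length x) - di))%nat with (i0 + S (length x))%nat by lia.
    replace (j0 + dj + (S (length y) - dj))%nat with (j0 + S (length y))%nat by lia.
    exact Hq.
Qed.

Lemma dtw_unique x y d : is_dtw x y d -> dtw x y = d.
Proof.
  intro Hd; unfold dtw.
  destruct (epsilon_spec (inhabits 0) (is_dtw x y) (ex_intro _ d Hd)) as [[p [Hp ->]] Hlow].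
  destruct Hd as [[q [Hq ->]] Hlow'].
  apply Rle_antisym; [apply Hlow, Hq | apply Hlow', Hp].
Qed.

Lemma dtw_least x y c : least (align x y) c -> dtw x y = sqrt c.
Proof.
  intros [Hc Hmin]; apply dtw_unique; split.
  - destruct (path_of_align _ _ _ Hc 0 0 _ _ eq_refl eq_refl) as (p & Hp & Hcost).
    exists p; split; [exact Hp | rewrite path_cost_offset, Hcost; reflexivity].
  - intros p Hp; apply sqrt_le_1_alt, Hmin; rewrite path_cost_offset.
    exact (align_of_path p 0 0 x y Hp).
Qed.

Lemma dtw_nonneg x y : x <> [] -> y <> [] -> 0 <= dtw x y.
Proof.
  intros Hx Hy; destruct (align_least x y Hx Hy) as [c Hc]; rewrite (dtw_least _ _ _ Hc).
  apply sqrt_pos.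
Qed.

Lemma dtw_sym x y : x <> [] -> y <> [] -> dtw x y = dtw y x.
Proof.
  intros Hx Hy; destruct (align_least x y Hx Hy) as [c [Hc Hmin]].
  rewrite (dtw_least x y c), (dtw_least y x c); [reflexivity | |split; assumption].
  split; [apply align_sym, Hc | intros c' Hc'; apply Hmin, align_sym, Hc'].
Qed.

Fixpoint irreducible (x : list R) : Prop :=
  match x with
  | a :: ((b :: _) as t) => a <> b /\ irreducible t
  | _ => True
  end.

Lemma irreducible_tail a x : irreducible (a :: x) -> irreducible x.
Proof. destruct x; cbn; tauto. Qed.

Lemma condense_cons a x : condense (a :: x) =
  match condense x with
  | [] => [a]
  | b :: t => if Req_EM_T a b then b :: t else a :: b :: t
  end.
Proof. reflexivity. Qed.

Lemma condense_eq_nil x : condense x = [] -> x = [].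
Proof.
  destruct x as [|a x]; [reflexivity|]; rewrite condense_cons.
  destruct (condense x); [discriminate|]; destruct Req_EM_T; discriminate.
Qed.

Lemma condense_not_nil x : x <> [] -> condense x <> [].
Proof. intros Hx E; apply Hx, condense_eq_nil, E. Qed.

Lemma condense_cons_cases a x :
  (exists t, condense x = a :: t /\ condense (a :: x) = a :: t) \/
  condense (a :: x) = a :: condense x.
Proof.
  rewrite condense_cons; destruct (condense x) as [|b t]; [now right|].
  destruct Req_EM_T as [<- | _]; [left; eauto | now right].
Qed.

Lemma condense_head a x : exists t, condense (a :: x) = a :: t.
Proof. destruct (condense_cons_cases a x) as [(t & _ & E) | E]; eauto. Qed.

Lemma irreducible_condense x : irreducible (condense x).
Proof.
  induction x as [|a x IH]; [exact I|]; rewrite condense_cons.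
  destruct (condense x) as [|b t]; [exact I|].
  destruct Req_EM_T; [exact IH | split; assumption].
Qed.

Lemma condense_irreducible x : irreducible x -> condense x = x.
Proof.
  induction x as [|a x IH]; intro H; [reflexivity|].
  rewrite condense_cons, (IH (irreducible_tail _ _ H)).
  destruct x as [|b t]; [reflexivity|]; destruct H as [Hab _].
  destruct Req_EM_T; [contradiction | reflexivity].
Qed.

Lemma condense_idem x : condense (condense x) = condense x.
Proof. apply condense_irreducible, irreducible_condense. Qed.

(* Moves that stay inside a run of equal values are dropped; each costs [(a - b) ^ 2 >= 0]. *)
Lemma align_condense x y c : align x y c ->
  exists c', c' <= c /\ align (condense x) (condense y) c'.
Proof.
  induction 1 as [a b | a b x y c _ [c1 [Hle H1]] | a b x y c _ [c1 [Hle H1]]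
                 | a b x y c _ [c1 [Hle H1]]];
    pose proof (pow2_ge_0 (a - b)).
  - exists ((a - b) ^ 2); split; [lra | apply align_one].
  - destruct (condense_cons_cases a x) as [(t & E1 & E2) | E].
    + exists c1; rewrite E2; rewrite E1 in H1; split; [lra | exact H1].
    + destruct (condense_head b y) as [s Es]; rewrite Es in H1 |- *; rewrite E.
      exists ((a - b) ^ 2 + c1); split; [lra | apply align_down, H1].
  - destruct (condense_cons_cases b y) as [(t & E1 & E2) | E].
    + exists c1; rewrite E2; rewrite E1 in H1; split; [lra | exact H1].
    + destruct (condense_head a x) as [s Es]; rewrite Es in H1 |- *; rewrite E.
      exists ((a - b) ^ 2 + c1); split; [lra | apply align_right, H1].
  - destruct (condense_cons_cases a x) as [(t & E1 & E2) | E];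
      destruct (condense_cons_cases b y) as [(s & F1 & F2) | F].
    + exists c1; rewrite E2, F2; rewrite E1, F1 in H1; split; [lra | exact H1].
    + exists ((a - b) ^ 2 + c1); rewrite E2, F; rewrite E1 in H1.
      split; [lra | apply align_right, H1].
    + exists ((a - b) ^ 2 + c1); rewrite E, F2; rewrite F1 in H1.
      split; [lra | apply align_down, H1].
    + exists ((a - b) ^ 2 + c1); rewrite E, F; split; [lra | apply align_diag, H1].
Qed.

(* A zero-cost down or right move pairs two equal consecutive values of one series. *)
Lemma align_zero_irreducible x y :
  align x y 0 -> irreducible x -> irreducible y -> x = y.
Proof.
  remember 0 as z eqn:Hz; intro H; revert Hz.
  induction H as [a b | a b x y c H _ | a b x y c H _ | a b x y c H IH];
    intros Hz Ix Iy; pose proof (pow2_ge_0 (a - b)).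
  - replace b with a by nra; reflexivity.
  - pose proof (align_nonneg _ _ _ H).
    destruct x as [|a' x]; [destruct (align_nil_l _ _ H)|].
    pose proof (align_head_le _ _ _ _ _ H).
    replace b with a in * by nra; replace a' with a in Ix by nra.
    destruct Ix as [[] _]; reflexivity.
  - pose proof (align_nonneg _ _ _ H).
    destruct y as [|b' y]; [destruct (align_nil_r _ _ H)|].
    pose proof (align_head_le _ _ _ _ _ H).
    replace b with a in * by nra; replace b' with a in Iy by nra.
    destruct Iy as [[] _]; reflexivity.
  - pose proof (align_nonneg _ _ _ H).
    replace b with a by nra; f_equal.
    apply IH; [lra | eapply irreducible_tail, Ix | eapply irreducible_tail, Iy].
Qed.

Lemma align_zero_of_condense_eq x y : x <> [] -> y <> [] ->
  condense x = condense y -> align x y 0.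
Proof.
  revert y; induction x as [|a x IHx]; intros y Hx Hy E; [congruence|].
  induction y as [|b y IHy]; [congruence|].
  assert (a = b) as <-.
  { destruct (condense_head a x) as [t Et], (condense_head b y) as [s Es]; congruence. }
  replace 0 with ((a - a) ^ 2 + 0) by ring.
  destruct (condense_cons_cases a x) as [(t & E1 & E2) | E1].
  { apply align_down, IHx; [intros ->; discriminate | discriminate | congruence]. }
  destruct (condense_cons_cases a y) as [(s & F1 & F2) | F1].
  { apply align_right, IHy; [intros ->; discriminate | congruence]. }
  rewrite E1, F1 in E; injection E as E.
  destruct x as [|a' x], y as [|b' y].
  - rewrite Rplus_0_r; apply align_one.
  - symmetry in E; apply condense_eq_nil in E; discriminate.
  - apply condense_eq_nil in E; discriminate.
  - apply align_diag, IHx; [discriminate | discriminate | exact E].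
Qed.

Lemma dtw_eq0_iff x y : x <> [] -> y <> [] -> (dtw x y = 0 <-> condense x = condense y).
Proof.
  intros Hx Hy; destruct (align_least x y Hx Hy) as [c [Hc Hmin]].
  rewrite (dtw_least x y c) by (split; assumption).
  pose proof (align_nonneg _ _ _ Hc); split.
  - intro H0; apply sqrt_eq_0 in H0; [subst c | assumption].
    destruct (align_condense _ _ _ Hc) as [c' [Hle H']].
    pose proof (align_nonneg _ _ _ H'); replace c' with 0 in H' by lra.
    apply align_zero_irreducible; [exact H' | apply irreducible_condense ..].
  - intro E; pose proof (Hmin 0 (align_zero_of_condense_eq x y Hx Hy E)).
    replace c with 0 by lra; apply sqrt_0.
Qed.

Lemma dtw_condense_le x y : x <> [] -> y <> [] -> dtw (condense x) (condense y) <= dtw x y.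
Proof.
  intros Hx Hy.
  destruct (align_least x y Hx Hy) as [c Hc].
  destruct (align_least (condense x) (condense y)) as [c' Hc'];
    [apply condense_not_nil, Hx | apply condense_not_nil, Hy|].
  rewrite (dtw_least _ _ _ Hc), (dtw_least _ _ _ Hc'); apply sqrt_le_1_alt.
  destruct (align_condense _ _ _ (proj1 Hc)) as [c1 [Hle H1]].
  pose proof (proj2 Hc' c1 H1); lra.
Qed.

Lemma ts_not_nil (x : ts) : proj1_sig x <> [].
Proof. destruct x as [[|a l] Hl]; cbn in *; [lia | discriminate]. Qed.

Lemma ts_condense_not_nil (x : ts) : condense (proj1_sig x) <> [].
Proof. apply condense_not_nil, ts_not_nil. Qed.

Lemma widen_iff (x y : ts) : widen x y <-> condense (proj1_sig x) = condense (proj1_sig y).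
Proof. apply dtw_eq0_iff; apply ts_not_nil. Qed.

Lemma condense_length_pos x : (1 <= length x)%nat -> (1 <= length (condense x))%nat.
Proof.
  intro H; destruct (condense x) eqn:E; [|cbn; lia].
  apply condense_eq_nil in E; subst x; cbn in H; lia.
Qed.

Definition ts_condense (x : ts) : ts :=
  exist _ (condense (proj1_sig x)) (condense_length_pos _ (proj2_sig x)).

Lemma widen_ts_condense (x : ts) : widen x (ts_condense x).
Proof. apply widen_iff; cbn; rewrite condense_idem; reflexivity. Qed.

Lemma is_glb_twi_set (x y : ts) :
  is_glb (twi_set (cls x) (cls y)) (dtw (condense (proj1_sig x)) (condense (proj1_sig y))).
Proof.
  split.
  - intros s (x' & y' & Hx' & Hy' & ->); unfold cls in Hx', Hy'.
    apply widen_iff in Hx', Hy'; rewrite Hx', Hy'.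
    apply dtw_condense_le; apply ts_not_nil.
  - intros b Hb; apply Hb.
    exists (ts_condense x), (ts_condense y); split; [|split]; [apply widen_ts_condense .. | reflexivity].
Qed.

Lemma Rinf_glb (S : R -> Prop) r : is_glb S r -> Rinf S = r.
Proof.
  intro Hr; unfold Rinf.
  destruct (epsilon_spec (inhabits 0) (is_glb S) (ex_intro _ r Hr)) as [Hlow Hgreat].
  destruct Hr as [Hlow' Hgreat'].
  apply Rle_antisym; [apply Hgreat', Hlow | apply Hgreat, Hlow'].
Qed.

Lemma twi_toT (x y : ts) :
  twi (toT x) (toT y) = dtw (condense (proj1_sig x)) (condense (proj1_sig y)).
Proof. apply Rinf_glb, is_glb_twi_set. Qed.

Lemma toT_eq_iff (x y : ts) : toT x = toT y <-> condense (proj1_sig x) = condense (proj1_sig y).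
Proof.
  split.
  - intro E; apply widen_iff.
    assert (Hcls : cls x = cls y) by exact (f_equal (@proj1_sig _ _) E).
    change (cls x y); rewrite Hcls; apply widen_iff; reflexivity.
  - intro E; apply subset_eq_compat.
    extensionality z; apply propositional_extensionality; unfold cls.
    rewrite !widen_iff, E; reflexivity.
Qed.

Lemma Tstar_toT (A : Tstar) : exists x, A = toT x.
Proof.
  destruct A as [P [x Hx]]; exists x; apply subset_eq_compat, Hx.
Qed.

Theorem theorem1 :
  (forall x x' y y' : ts, widen x x' -> widen y y' ->
     twi (toT x) (toT y) = twi (toT x') (toT y')) /\
  (forall x y : ts, exists r, is_glb (twi_set (cls x) (cls y)) r) /\
  (semi_metric Tstar twi) /\
  (forall x y : ts,
     twi (toT x) (toT y) = dtw (condense (proj1_sig x)) (condense (proj1_sig y))).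
Proof.
  split; [|split; [|split]].
  - intros x x' y y' Hx Hy; apply widen_iff in Hx, Hy.
    rewrite !twi_toT, Hx, Hy; reflexivity.
  - intros x y; eexists; apply is_glb_twi_set.
  - split; [|split]; intros A B;
      destruct (Tstar_toT A) as [x ->], (Tstar_toT B) as [y ->]; rewrite !twi_toT.
    + apply dtw_nonneg; apply ts_condense_not_nil.
    + rewrite toT_eq_iff, dtw_eq0_iff, !condense_idem by apply ts_condense_not_nil.
      reflexivity.
    + apply dtw_sym; apply ts_condense_not_nil.
  - exact twi_toT.
Qed.
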